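(* Let $m\ge 2$ and $1\le\ell<m$. The algorithm that, given an $\ell$-truncated election, returns a candidate with the highest $\mathrm{worst}$ Minimax score (defined in the context) approximates the Minimax rule within a factor of $$\frac{1}{(m-\ell)\left(1+\frac{\ell^2}{m^2-\ell^2-m+\ell}\right)}\ \ge\ \frac{1}{m-\ell/2};$$ that is, for every election $E$, the returned candidate $w$ satisfies $\mathrm{sc}_{\mathrm{MM}}(w)\ge\frac{1}{(m-\ell)\left(1+\frac{\ell^2}{m^2-\ell^2-m+\ell}\right)}\max_{c\in C}\mathrm{sc}_{\mathrm{MM}}(c)$, and moreover $(m-\ell)\left(1+\frac{\ell^2}{m^2-\ell^2-m+\ell}\right)\le m-\ell/2$.
   Context: An election consists of a set $V$ of $n$ voters and a set $C$ of $m$ candidates; each voter $v$ has a strict linear order $\succ_v$ over $C$. For $c,c'\in C$, $\mathrm{sc}_{\mathrm{MM}}(c,c')=|\{v: c\succ_v c'\}|$ and $\mathrm{sc}_{\mathrm{MM}}(c)=\min_{c'\neq c}\mathrm{sc}_{\mathrm{MM}}(c,c')$. In the $\ell$-truncated election each voter reveals only the ordered list of her top $\ell$ candidates. For a voter $v$ and candidates $c\neq d$, write $c\succ_v^t d$ if $c$ is among $v$'s top $\ell$ candidates and either $d$ is not among them or $c\succ_v d$. The worst Minimax score is $\mathrm{worst}(c)=\min_{c'\neq c}|\{v\in V: c\succ_v^t c'\}|$ (the Minimax score of $c$ when $c$ is placed last by every voter not listing it) and the best Minimax score is $\mathrm{best}(c)=\min_{c'\neq c}\big(n-|\{v\in V: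 c'\succ_v^t c\}|\big)$. *)

From HB Require Import structures.
From mathcomp Require Import all_boot all_order all_algebra all_fingroup.
Set Implicit Arguments. Unset Strict Implicit. Unset Printing Implicit Defensive.

(* Voter v's strict linear order is given by a rank permutation
   [rk v : {perm 'I_m}]: rk v c is the position of c in v's ranking
   (0 = most preferred).  c >_v d  iff  rk v c < rk v d. *)
Definition election (n m : nat) := 'I_n -> {perm 'I_m}.

Section Defs.
Variables (n m : nat) (E : election n m).

Definition prefers (v : 'I_n) (c d : 'I_m) : bool := (E v c < E v d)%N.

Definition sc_pair (c c' : 'I_m) : nat := #|[set v | prefers v c c']|.

(* minimum over c' <> c (well defined as m >= 2; default n is the min of the empty set) *)
Definition sc_MM (c : 'I_m) : nat := \big[minn/n]_(c' | c' != c) sc_pair c c'.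

Variable l : nat.

Definition tprefers (v : 'I_n) (c d : 'I_m) : bool :=
  (E v c < l)%N && (~~ (E v d < l)%N || prefers v c d).

Definition worst (c : 'I_m) : nat :=
  \big[minn/n]_(c' | c' != c) #|[set v | tprefers v c c']|.

Definition best (c : 'I_m) : nat :=
  \big[minn/n]_(c' | c' != c) (n - #|[set v | tprefers v c' c]|).
End Defs.

Local Open Scope ring_scope.
Definition approx_factor (m l : nat) : rat :=
  (m%:R - l%:R) * (1 + (l%:R ^+ 2) / (m%:R ^+ 2 - l%:R ^+ 2 - m%:R + l%:R)).

From HB Require Import structures.
From mathcomp Require Import all_boot all_order all_algebra all_fingroup.
From mathcomp Require Import zify ring lra.
Import Order.TTheory GRing.Theory Num.Theory.
Local Open Scope ring_scope.
Set Implicit Arguments. Unset Strict Implicit.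

(* Let c be a Minimax winner and y the number of voters who do not list c in
   their top l.  A voter ranks c above at most m-1 candidates, and above at most
   m-1-l when c is not in her top l, so counting the pairs (v, d) with c >_v d
   gives (m-1) sc(c) + l y <= (m-1) n.  In the truncated election
   sc(c) <= y + worst(c) <= y + worst(w), and the candidate ranked first most
   often shows n <= m worst(w).  Eliminating y and n gives
   (m-1+l) sc(c) <= (m^2-m+l) worst(w) <= (m^2-m+l) sc(w), and
   (m^2-m+l)/(m+l-1) is exactly the approximation factor. *)

Section BigMin.
Variables (I : finType) (b : nat) (P : pred I) (F : I -> nat).

Lemma leq_bigmin k :
  (k <= b)%N -> (forall i, P i -> k <= F i)%N -> (k <= \big[minn/b]_(i | P i) F i)%N.
Proof.
move=> kb kF; apply: (big_ind (fun x => k <= x)%N) => // x y kx ky.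
by rewrite leq_min kx ky.
Qed.

Lemma bigmin_leq i : P i -> (\big[minn/b]_(j | P j) F j <= F i)%N.
Proof.
move=> Pi; rewrite unlock; have : i \in index_enum I by rewrite mem_index_enum.
elim: (index_enum I) => //= j r IHr; rewrite inE => /predU1P[<- | ir].
  by rewrite Pi geq_minl.
by case: (P j); rewrite ?geq_min IHr ?orbT.
Qed.

Lemma bigmin_leq_idx :
  (forall i, P i -> F i <= b)%N -> (\big[minn/b]_(i | P i) F i <= b)%N.
Proof.
move=> Fb; apply: (big_ind (fun x => x <= b)%N) => // x y xb yb.
by rewrite geq_min xb.
Qed.

End BigMin.

Lemma card_set_sum (T : finType) (P : pred T) : #|[set x | P x]| = (\sum_x P x)%N.
Proof. by rewrite -sum1dep_card big_mkcond; apply: eq_bigr => x; case: (P x). Qed.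

Lemma pigeonhole_fiber (A T : finType) (f : A -> T) :
  (0 < #|T|)%N -> exists t, (#|A| <= #|T| * #|[set a | f a == t]|)%N.
Proof.
move=> T_gt0; pose fiber t := #|[set a | f a == t]|.
have [t fiber_max] := bigop.eq_bigmax fiber T_gt0.
exists t; rewrite -/(fiber t) -fiber_max.
have -> : #|A| = (\sum_t fiber t)%N.
  rewrite -sum1_card (partition_big f predT) //=.
  by apply: eq_bigr => t' _; rewrite sum1dep_card.
rewrite -sum_nat_const; apply: leq_sum => t' _; exact: leq_bigmax.
Qed.

Lemma card_perm_lt (m l : nat) (s : {perm 'I_m}) :
  (l <= m)%N -> #|[set d | (s d < l)%N]| = l.
Proof.
move=> lm; have -> : [set d | (s d < l)%N] = s @^-1: [set widen_ord lm i | i : 'I_l].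
  apply/setP => d; rewrite !inE.
  apply/idP/imsetP => [sdl | [i _ ->] /=]; last exact: ltn_ord.
  by exists (Ordinal sdl) => //; apply: val_inj.
rewrite card_preimset; last exact: perm_inj.
by rewrite card_imset ?card_ord // => i j /(congr1 val) /= /val_inj.
Qed.

Section Election.
Variables (n m : nat) (E : election n m) (l : nat).

Definition outside_top (c : 'I_m) : {set 'I_n} := [set v | (l <= E v c)%N].

Lemma card_le_voters (A : {set 'I_n}) : (#|A| <= n)%N.
Proof. by rewrite -[X in (_ <= X)%N]card_ord max_card. Qed.

Lemma sc_MM_le_voters c : (sc_MM E c <= n)%N.
Proof. by apply: bigmin_leq_idx => c' _; apply: card_le_voters. Qed.

Lemma tprefers_prefers v c d : tprefers E l v c d -> prefers E v c d.
Proof.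
rewrite /tprefers /prefers -leqNgt => /andP[cl /orP[ld | //]].
exact: leq_trans cl ld.
Qed.

Lemma worst_le_sc_MM c : (worst E l c <= sc_MM E c)%N.
Proof.
apply: (big_ind2 (fun x y => x <= y)%N) => // [x1 x2 y1 y2 le1 le2|d _].
  by rewrite leq_min !geq_min le1 le2 orbT.
by apply/subset_leq_card/subsetP => v; rewrite !inE; apply: tprefers_prefers.
Qed.

(* The candidate ranked first by the most voters is, for l >= 1, strictly
   preferred in the truncated election by each of those voters to everybody. *)
Lemma worst_ge_plurality_share :
  (0 < m)%N -> (1 <= l)%N -> exists c, (n <= m * worst E l c)%N.
Proof.
move=> m_gt0 l_gt0; pose first v := (E v)^-1%g (Ordinal m_gt0).
have [c share] := pigeonhole_fiber first (ltac:(by rewrite card_ord)).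
rewrite !card_ord in share; exists c; apply: leq_trans share _.
rewrite leq_mul2l; apply/orP; right.
apply: leq_bigmin => [|d dc]; first exact: card_le_voters.
apply/subset_leq_card/subsetP => v; rewrite !inE => /eqP first_v.
have Evc : E v c = Ordinal m_gt0 by rewrite -first_v permKV.
have : E v d != E v c by rewrite (inj_eq perm_inj).
rewrite /tprefers /prefers Evc -(inj_eq val_inj) /=; lia.
Qed.

Lemma sc_MM_le_outside_add_worst c :
  (sc_MM E c <= #|outside_top c| + worst E l c)%N.
Proof.
rewrite -leq_subLR; apply: leq_bigmin => [|d dc].
  exact: leq_trans (leq_subr _ _) (sc_MM_le_voters c).
rewrite leq_subLR; apply: leq_trans (bigmin_leq n (sc_pair E c) dc) _.
apply: leq_trans (leq_card_setU _ _).1; apply/subset_leq_card/subsetP => v.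
by rewrite !inE /tprefers => ->; rewrite orbT andbT; case: leqP.
Qed.

(* Below c in v's ranking lie the candidates d with c >_v d; when c is not in
   v's top l, these, the top l candidates and c itself are pairwise distinct. *)
Lemma card_prefers_outside_le v c : (l <= m)%N ->
  (#|[set d | prefers E v c d]| + l * (l <= E v c) <= m.-1)%N.
Proof.
move=> lm; set A := [set d | prefers E v c d].
have cA : c \notin A by rewrite inE /prefers ltnn.
have [lc | _] := leqP l (E v c); last first.
  rewrite muln0 addn0 -[X in X.-1](card_ord m) -(cardsC1 c) subset_leq_card //.
  by apply/subsetP => d; rewrite in_setC1; apply: contraTneq => ->.
set B := [set d | (E v d < l)%N].
have AB : [disjoint A & B].
  by rewrite disjoints_subset; apply/subsetP => d; rewrite !inE /prefers; lia.
have cB : c \notin B by rewrite inE -leqNgt.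
have cardAB : #|A :|: B| = (#|A| + #|B|)%N by apply/eqP; rewrite (leq_card_setU A B).2.
have := max_card (c |: (A :|: B)).
rewrite cardsU1 in_setU (negbTE cA) (negbTE cB) /= cardAB.
rewrite card_perm_lt // card_ord muln1 add1n => ltAm.
by rewrite -ltnS (ltn_predK ltAm).
Qed.

Lemma sc_MM_outside_sum_bound c : (l <= m)%N ->
  (m.-1 * sc_MM E c + l * #|outside_top c| <= m.-1 * n)%N.
Proof.
move=> lm.
have cardC1 : #|[set d | d != c]| = m.-1.
  by rewrite -[X in X.-1](card_ord m) -(cardsC1 c); apply: eq_card => d; rewrite !inE.
have sum_sc : (m.-1 * sc_MM E c <= \sum_v #|[set d | prefers E v c d]|)%N.
  rewrite -cardC1 -sum_nat_cond_const.
  apply: (@leq_trans (\sum_(d | d != c) sc_pair E c d)).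
    by apply: leq_sum => d dc; apply: bigmin_leq.
  under eq_bigr => d _ do rewrite /sc_pair card_set_sum.
  rewrite exchange_big /=; apply: leq_sum => v _.
  by rewrite card_set_sum [leqRHS](bigID (fun d => d != c)) leq_addr.
have -> : (m.-1 * n = \sum_(v : 'I_n) m.-1)%N by rewrite sum_nat_const card_ord mulnC.
rewrite card_set_sum big_distrr.
apply: leq_trans (leq_add sum_sc (leqnn _)) _; rewrite -big_split.
by apply: leq_sum => v _; apply: card_prefers_outside_le.
Qed.

Lemma sc_MM_max_le_worst_winner w : (1 <= l < m)%N ->
  (forall c, worst E l c <= worst E l w)%N ->
  ((m.-1 + l) * \max_c sc_MM E c <= (m.-1 * m + l) * sc_MM E w)%N.
Proof.
case/andP=> l_gt0 lm w_max; have m_gt0 : (0 < m)%N by lia.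
have [c ->] := bigop.eq_bigmax (sc_MM E) (ltac:(by rewrite card_ord)).
have [c0 share] := worst_ge_plurality_share m_gt0 l_gt0.
have voters_le : (n <= m * worst E l w)%N.
  by apply: leq_trans share _; rewrite leq_mul2l w_max orbT.
have count_le := sc_MM_outside_sum_bound c (ltnW lm).
have outside_le := sc_MM_le_outside_add_worst c.
have worst_le := worst_le_sc_MM w.
set k := m.-1 in count_le *; set y := #|outside_top c| in count_le outside_le.
have km : (k * n <= k * (m * worst E l w))%N by rewrite leq_mul2l voters_le orbT.
have lW : (l * sc_MM E c <= l * y + l * worst E l w)%N.
  by rewrite -mulnDr leq_mul2l (leq_trans outside_le) ?leq_add2l ?orbT.
have WS : ((k * m + l) * worst E l w <= (k * m + l) * sc_MM E w)%N.
  by rewrite leq_mul2l worst_le orbT.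
nia.
Qed.

End Election.

Lemma approx_factorE (m l : nat) : (1 <= l < m)%N ->
  approx_factor m l = (m.-1 * m + l)%:R / (m.-1 + l)%:R.
Proof.
case: m => [|k] /andP[l_gt0 lk] //.
rewrite /approx_factor /= !natrD natrM -addn1 !natrD.
have l_ge1 : 1 <= l%:R :> rat by rewrite ler1n.
have l_le_k : l%:R <= k%:R :> rat by rewrite ler_nat.
by field; apply/andP; split; apply: lt0r_neq0; nra.
Qed.

Lemma approx_factor_le (m l : nat) : (1 <= l < m)%N ->
  approx_factor m l <= m%:R - l%:R / 2.
Proof.
move=> /[dup] /andP[l_gt0 lm] /approx_factorE ->.
have m_gt0 : (0 < m)%N by lia.
rewrite ler_pdivrMr ?ltr0n ?addn_gt0 ?l_gt0 ?orbT // !natrD natrM.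
have mE : m%:R = m.-1%:R + 1 :> rat by rewrite -[in LHS](prednK m_gt0) -addn1 natrD.
have l_ge1 : 1 <= l%:R :> rat by rewrite ler1n.
have l_le_k : l%:R <= m.-1%:R :> rat by rewrite ler_nat -ltnS prednK.
rewrite mE; nra.
Qed.

Theorem theorem8 (m l : nat) (hm : (2 <= m)%N) (hl1 : (1 <= l)%N) (hlm : (l < m)%N) :
  (forall (n : nat) (E : election n m) (w : 'I_m),
      (forall c : 'I_m, (worst E l c <= worst E l w)%N) ->
      (approx_factor m l)^-1 * (\max_(c : 'I_m) sc_MM E c)%:R <= (sc_MM E w)%:R :> rat)
  /\ approx_factor m l <= m%:R - l%:R / 2.
Proof.
have lm : (1 <= l < m)%N by rewrite hl1 hlm.
split; last exact: approx_factor_le.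
move=> n E w w_max; rewrite approx_factorE // invf_div mulrAC.
rewrite ler_pdivrMr ?ltr0n ?addn_gt0 ?hl1 ?orbT // -!natrM ler_nat [leqRHS]mulnC.
exact: sc_MM_max_le_worst_winner lm w_max.
Qed.
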